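(* A connected graph $G$ contains none of $P_5$, $C_4$, $C_5$, the claw, the bull as an induced subgraph if and only if $G$ is a co-chain graph.
   Context: All graphs are finite and simple. A graph $G$ is a co-chain graph if its vertex set can be partitioned into two cliques $X$ and $Y$ such that the vertices of $X$ can be ordered $x_1,\dots,x_{|X|}$ with $N[x_i]\subseteq N[x_j]$ for all $1\le i<j\le |X|$ (closed neighborhoods). $P_n$, $C_n$ denote the path and cycle on $n$ vertices; the claw is $K_{1,3}$; the bull is the $5$-vertex graph consisting of a triangle with two pendant edges attached at two distinct triangle vertices. *)

From mathcomp Require Import all_boot.
Set Implicit Arguments. Unset Strict Implicit. Unset Printing Implicit Defensive.

Definition simple_graph (T : finType) (e : rel T) : Prop :=
  symmetric e /\ irreflexive e.

Definition connected (T : finType) (e : rel T) : Prop :=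
  forall x y : T, connect e x y.

Definition graph_of (n : nat) (E : seq (nat * nat)) : rel 'I_n :=
  fun i j => ((val i, val j) \in E) || ((val j, val i) \in E).
Arguments graph_of : clear implicits.

Definition P5 : rel 'I_5 := graph_of 5 [:: (0,1); (1,2); (2,3); (3,4)].
Definition C4 : rel 'I_4 := graph_of 4 [:: (0,1); (1,2); (2,3); (3,0)].
Definition C5 : rel 'I_5 := graph_of 5 [:: (0,1); (1,2); (2,3); (3,4); (4,0)].
Definition claw : rel 'I_4 := graph_of 4 [:: (0,1); (0,2); (0,3)].
Definition bull : rel 'I_5 := graph_of 5 [:: (0,1); (1,2); (2,0); (0,3); (1,4)].

Definition induced_sub (n : nat) (H : rel 'I_n) (T : finType) (e : rel T) : Prop :=
  exists f : 'I_n -> T, injective f /\ forall i j, e (f i) (f j) = H i j.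

Definition closed_nbhd (T : finType) (e : rel T) (x : T) : {set T} :=
  [set y | (y == x) || e x y].

Definition is_clique (T : finType) (e : rel T) (A : {set T}) : Prop :=
  forall x y, x \in A -> y \in A -> x != y -> e x y.

Definition co_chain (T : finType) (e : rel T) : Prop :=
  exists (X Y : {set T}) (s : seq T),
    [/\ X :|: Y = setT, [disjoint X & Y], is_clique e X & is_clique e Y] /\
    [/\ uniq s, X = [set x in s] &
        forall (x0 : T) (i j : nat), i < j -> j < size s ->
          closed_nbhd e (nth x0 s i) \subset closed_nbhd e (nth x0 s j)].

From mathcomp Require Import all_boot.
Set Implicit Arguments. Unset Strict Implicit. Unset Printing Implicit Defensive.

(* A graph is co-chain iff its vertices split into cliques X and ~: X such
   that the closed neighbourhoods of X are pairwise comparable: sorting X by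
   neighbourhood size gives the enumeration.  Such a graph has no stable
   triple and a bipartite complement, which excludes P5, the claw and the bull
   (they contain stable triples) and C5 (its complement is a 5-cycle); an
   induced C4 would put two adjacent vertices with private neighbours into X.
   Conversely, let G be connected and free of the five graphs, and let v, a, b
   be stable.  If a and b both share a neighbour with v we find a claw, a bull
   or a P5; if neither does, both are at distance 3 from v (P5-freeness) and
   the two induced paths again yield a claw, a bull or a P5.  So exactly one
   of a, b shares a neighbour with v, which cannot hold at all three vertices
   of a stable triple.  Now let X = N[u] have minimum size.  Then ~: X is a
   clique (no stable triple through u), X is a clique (by minimality two
   non-adjacent neighbours of u have neighbours outside X, giving a C4 or a
   C5), and two vertices of X with private neighbours would span a C4. *)

Definition nbhd_comparable (T : finType) (e : rel T) (x y : T) : bool :=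
  (closed_nbhd e x \subset closed_nbhd e y) || (closed_nbhd e y \subset closed_nbhd e x).

Definition co_chain_partition (T : finType) (e : rel T) (X : {set T}) : Prop :=
  [/\ is_clique e X, is_clique e (~: X) & {in X &, forall x y, nbhd_comparable e x y}].

Definition stable3 (T : finType) (e : rel T) (a b c : T) : bool :=
  [&& a != b, b != c, a != c & [&& ~~ e a b, ~~ e b c & ~~ e a c]].

Definition common_nbr (T : finType) (e : rel T) (x y : T) : bool :=
  [exists z, e x z && e z y].

Definition twin_free n (H : rel 'I_n) : Prop := forall i j, H i =1 H j -> i = j.

Ltac ord_cases i := case: i => [[|[|[|[|[|?]]]]] ?] //.

Lemma P5_C5_bull_twin_free : [/\ twin_free P5, twin_free C5 & twin_free bull].
Proof.
split=> i j tw; apply/val_inj;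
  move: (tw (@Ordinal 5 0 isT)) (tw (@Ordinal 5 1 isT)) (tw (@Ordinal 5 2 isT))
        (tw (@Ordinal 5 3 isT)) (tw (@Ordinal 5 4 isT)); clear tw;
  by ord_cases i; ord_cases j.
Qed.

Lemma sorted_card_subset (T U : finType) (F : T -> {set U}) (s : seq T) :
  {in s &, forall x y, (F x \subset F y) || (F y \subset F x)} ->
  sorted (fun x y => #|F x| <= #|F y|) s ->
  forall x0 i j, i < j -> j < size s -> F (nth x0 s i) \subset F (nth x0 s j).
Proof.
move=> cmp srt x0 i j ij js.
have i_s : i < size s by apply: ltn_trans js.
have le_card : #|F (nth x0 s i)| <= #|F (nth x0 s j)|.
  have card_trans : transitive (fun x y => #|F x| <= #|F y|).
    by move=> ? ? ?; apply: leq_trans.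
  by apply: (sorted_ltn_nth card_trans x0 srt); rewrite ?inE.
case/orP: (cmp _ _ (mem_nth x0 i_s) (mem_nth x0 js)) => // sub_ji.
by rewrite (eqP (_ : F (nth x0 s j) == F (nth x0 s i))) // eqEcard sub_ji.
Qed.

Lemma co_chainP (T : finType) (e : rel T) :
  co_chain e <-> exists X, co_chain_partition e X.
Proof.
split.
- move=> [X [Y [s [[cover disj cliqueX cliqueY] [s_uniq defX chain]]]]].
  have defY : Y = ~: X.
    apply/setP=> y; rewrite inE; apply/idP/idP => [yY|yX].
      by rewrite (disjointFl disj yY).
    by move/setP/(_ y): cover; rewrite inE in_setT (negbTE yX).
  exists X; split; rewrite -?defY // => x y; rewrite defX !inE => xs ys.
  rewrite /nbhd_comparable -(nth_index x xs) -(nth_index x ys).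
  have ixs : index x s < size s by rewrite index_mem.
  have iys : index y s < size s by rewrite index_mem.
  case: (ltngtP (index x s) (index y s)) => [lt|gt|->]; last by rewrite subxx.
  + by apply/orP; left; apply: chain.
  + by apply/orP; right; apply: chain.
- move=> [X [cliqueX cliqueY cmp]].
  pose s := sort (fun x y => #|closed_nbhd e x| <= #|closed_nbhd e y|) (enum X).
  have mem_s x : (x \in s) = (x \in X) by rewrite mem_sort mem_enum.
  exists X, (~: X), s; split; split=> //.
  + by rewrite setUCr.
  + by rewrite disjoints_subset setCK.
  + by rewrite sort_uniq enum_uniq.
  + by apply/setP=> x; rewrite inE mem_s.
  + apply: sorted_card_subset; first by move=> x y; rewrite !mem_s; apply: cmp.
    by apply: sort_sorted => x y; apply: leq_total.
Qed.

Lemma connect_edge_out (T : finType) (e : rel T) (S : pred T) x y :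
  x \in S -> y \notin S -> connect e x y -> exists p q, [/\ p \in S, q \notin S & e p q].
Proof.
move=> xS yS /connectP[s]; elim: s x xS => [|z s IHs] x xS /=.
  by move=> _ yx; rewrite yx xS in yS.
case/andP=> xz zs y_last; have [zS|zS] := boolP (z \in S).
  exact: IHs zS zs y_last.
by exists x, z.
Qed.

Section SimpleGraph.

Variables (T : finType) (e : rel T).
Hypotheses (e_sym : symmetric e) (e_irr : irreflexive e).

Local Hint Extern 0 (is_true (e _ _)) => rewrite e_sym; assumption : core.
Local Hint Extern 0 (e _ _ = _) => rewrite e_sym; assumption : core.
Local Hint Extern 0 (is_true (~~ e _ _)) => rewrite e_sym; assumption : core.
Local Hint Extern 0 (is_true (_ != _)) => rewrite eq_sym; assumption : core.

Lemma neq_of_sep x y z : e z x -> ~~ e z y -> x != y.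
Proof. by move=> zx; apply: contraNneq => <-. Qed.

Lemma common_nbrC x y : common_nbr e x y = common_nbr e y x.
Proof. by apply/existsP/existsP => -[z /andP[xz zy]]; exists z; apply/andP; split. Qed.

Lemma stable3_perm a b c : stable3 e a b c -> stable3 e b a c /\ stable3 e c a b.
Proof.
case/and4P=> ab bc ac /and3P[eab ebc eac].
by split; apply/and4P; split=> //; apply/and3P; split.
Qed.

Lemma notin_closed_nbhd x y : (y \notin closed_nbhd e x) = (y != x) && ~~ e x y.
Proof. by rewrite inE negb_or. Qed.

Lemma induced_sub_of_adjacency n (H : rel 'I_n) (f : 'I_n -> T) :
  (forall i j, e (f i) (f j) = H i j) ->
  (forall i j, i != j -> ~~ H i j -> H i =1 H j -> f i != f j) -> induced_sub H e.
Proof.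
move=> fH twins; exists f; split=> // i j fij; apply/eqP/negPn/negP => ij.
have tw : H i =1 H j by move=> k; rewrite -!fH fij.
have nHij : ~~ H i j by rewrite -fH fij e_irr.
by move: (twins i j ij nHij tw); rewrite fij eqxx.
Qed.

Lemma induced_P5 a b c d w :
  e a b -> e b c -> e c d -> e d w ->
  ~~ e a c -> ~~ e a d -> ~~ e a w -> ~~ e b d -> ~~ e b w -> ~~ e c w ->
  induced_sub P5 e.
Proof.
move=> *; have [P5_tf _ _] := P5_C5_bull_twin_free.
apply: (@induced_sub_of_adjacency _ _ (fun i => nth a [:: a; b; c; d; w] i)).
  by move=> i j; ord_cases i; ord_cases j; rewrite /= ?e_irr //; apply/negbTE.
by move=> i j /eqP ij _ /P5_tf.
Qed.

Lemma induced_C4 a b c d :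
  e a b -> e b c -> e c d -> e d a -> ~~ e a c -> ~~ e b d -> a != c -> b != d ->
  induced_sub C4 e.
Proof.
move=> *; apply: (@induced_sub_of_adjacency _ _ (fun i => nth a [:: a; b; c; d] i)).
  by move=> i j; ord_cases i; ord_cases j; rewrite /= ?e_irr //; apply/negbTE.
by move=> i j; ord_cases i; ord_cases j.
Qed.

Lemma induced_C5 a b c d w :
  e a b -> e b c -> e c d -> e d w -> e w a ->
  ~~ e a c -> ~~ e a d -> ~~ e b d -> ~~ e b w -> ~~ e c w ->
  induced_sub C5 e.
Proof.
move=> *; have [_ C5_tf _] := P5_C5_bull_twin_free.
apply: (@induced_sub_of_adjacency _ _ (fun i => nth a [:: a; b; c; d; w] i)).
  by move=> i j; ord_cases i; ord_cases j; rewrite /= ?e_irr //; apply/negbTE.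
by move=> i j /eqP ij _ /C5_tf.
Qed.

Lemma induced_claw c a b d :
  e c a -> e c b -> e c d -> ~~ e a b -> ~~ e a d -> ~~ e b d ->
  a != b -> a != d -> b != d ->
  induced_sub claw e.
Proof.
move=> *; apply: (@induced_sub_of_adjacency _ _ (fun i => nth a [:: c; a; b; d] i)).
  by move=> i j; ord_cases i; ord_cases j; rewrite /= ?e_irr //; apply/negbTE.
by move=> i j; ord_cases i; ord_cases j.
Qed.

Lemma induced_bull t0 t1 t2 p3 p4 :
  e t0 t1 -> e t1 t2 -> e t2 t0 -> e t0 p3 -> e t1 p4 ->
  ~~ e t0 p4 -> ~~ e t1 p3 -> ~~ e t2 p3 -> ~~ e t2 p4 -> ~~ e p3 p4 ->
  induced_sub bull e.
Proof.
move=> *; have [_ _ bull_tf] := P5_C5_bull_twin_free.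
apply: (@induced_sub_of_adjacency _ _ (fun i => nth t0 [:: t0; t1; t2; p3; p4] i)).
  by move=> i j; ord_cases i; ord_cases j; rewrite /= ?e_irr //; apply/negbTE.
by move=> i j /eqP ij _ /bull_tf.
Qed.

Section Partition.

Variable X : {set T}.
Hypothesis partX : co_chain_partition e X.

Lemma partition_nonadjacent x y : x != y -> ~~ e x y -> (x \in X) != (y \in X).
Proof.
case: partX => cliqueX cliqueY _ xy; apply: contraNN => /eqP sameXY.
case xX: (x \in X) sameXY => yX.
  by apply: cliqueX; rewrite -?yX.
by apply: cliqueY; rewrite ?inE ?xX -?yX.
Qed.

Lemma partition_no_stable3 a b c : ~~ stable3 e a b c.
Proof.
apply/negP => /and4P[ab bc ac /and3P[eab ebc eac]].
move: (partition_nonadjacent ab eab) (partition_nonadjacent bc ebc).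
move: (partition_nonadjacent ac eac).
by case: (a \in X); case: (b \in X); case: (c \in X).
Qed.

Lemma partition_no_co_C5 a0 a1 a2 a3 a4 :
  a0 != a1 -> a1 != a2 -> a2 != a3 -> a3 != a4 -> a4 != a0 ->
  ~~ e a0 a1 -> ~~ e a1 a2 -> ~~ e a2 a3 -> ~~ e a3 a4 -> ~~ e a4 a0 -> False.
Proof.
move=> a01 a12 a23 a34 a40 e01 e12 e23 e34 e40.
move: (partition_nonadjacent a01 e01) (partition_nonadjacent a12 e12).
move: (partition_nonadjacent a23 e23) (partition_nonadjacent a34 e34).
move: (partition_nonadjacent a40 e40).
by case: (a0 \in X); case: (a1 \in X); case: (a2 \in X); case: (a3 \in X); case: (a4 \in X).
Qed.

Lemma partition_no_private_nbrs x y p q : x \in X -> y \in X ->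
  e x p -> p != y -> ~~ e y p -> e y q -> q != x -> ~~ e x q -> False.
Proof.
case: partX => _ _ cmp xX yX xp py yp yq qx xq; move: (cmp x y xX yX).
rewrite /nbhd_comparable; apply/negP; rewrite negb_or; apply/andP; split; apply/subsetPn.
  by exists p; rewrite !inE ?xp ?orbT // negb_or py.
by exists q; rewrite !inE ?yq ?orbT // negb_or qx.
Qed.

Lemma partition_no_C4 a b c d :
  e a b -> e b c -> e c d -> e d a -> ~~ e a c -> ~~ e b d -> a != c -> b != d -> False.
Proof.
move=> ab bc cd da eac ebd ac bd.
move: (partition_nonadjacent ac eac) (partition_nonadjacent bd ebd).
case aX: (a \in X); case bX: (b \in X); case cX: (c \in X); case dX: (d \in X) => // _ _.
- by apply: (partition_no_private_nbrs (x := a) (y := b) (p := d) (q := c)).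
- by apply: (partition_no_private_nbrs (x := a) (y := d) (p := b) (q := c)).
- by apply: (partition_no_private_nbrs (x := c) (y := b) (p := d) (q := a)).
- by apply: (partition_no_private_nbrs (x := c) (y := d) (p := b) (q := a)).
Qed.

Lemma partition_no_induced_stable3 n (H : rel 'I_n) i j k :
  stable3 H i j k -> ~ induced_sub H e.
Proof.
move=> Hijk [f [f_inj fe]]; have := partition_no_stable3 (f i) (f j) (f k).
by rewrite /stable3 !fe !(inj_eq f_inj) -/(stable3 H i j k) Hijk.
Qed.

End Partition.

Lemma co_chain_no_induced : co_chain e ->
  [/\ ~ induced_sub P5 e, ~ induced_sub C4 e, ~ induced_sub C5 e,
      ~ induced_sub claw e & ~ induced_sub bull e].
Proof.
move=> /co_chainP[X partX]; split.
- by apply: (partition_no_induced_stable3 partX (i := @Ordinal 5 0 isT)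
               (j := @Ordinal 5 2 isT) (k := @Ordinal 5 4 isT)).
- move=> [f [f_inj fe]].
  by apply: (partition_no_C4 partX (a := f (@Ordinal 4 0 isT)) (b := f (@Ordinal 4 1 isT))
               (c := f (@Ordinal 4 2 isT)) (d := f (@Ordinal 4 3 isT)));
    rewrite ?fe ?(inj_eq f_inj).
- move=> [f [f_inj fe]].
  by apply: (partition_no_co_C5 partX (a0 := f (@Ordinal 5 0 isT)) (a1 := f (@Ordinal 5 2 isT))
               (a2 := f (@Ordinal 5 4 isT)) (a3 := f (@Ordinal 5 1 isT))
               (a4 := f (@Ordinal 5 3 isT)));
    rewrite ?fe ?(inj_eq f_inj).
- by apply: (partition_no_induced_stable3 partX (i := @Ordinal 4 1 isT)
               (j := @Ordinal 4 2 isT) (k := @Ordinal 4 3 isT)).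
- by apply: (partition_no_induced_stable3 partX (i := @Ordinal 5 2 isT)
               (j := @Ordinal 5 3 isT) (k := @Ordinal 5 4 isT)).
Qed.

Section ForbiddenFree.

Hypothesis e_conn : connected e.
Hypotheses (noP5 : ~ induced_sub P5 e) (noC4 : ~ induced_sub C4 e)
  (noC5 : ~ induced_sub C5 e) (noclaw : ~ induced_sub claw e) (nobull : ~ induced_sub bull e).

Lemma induced_P4_of_no_common_nbr v a :
  v != a -> ~~ e v a -> ~~ common_nbr e v a ->
  exists x z, [/\ e v x, e x z, e z a & ~~ e v z].
Proof.
move=> va eva no_va.
pose at2 z := [&& z != v, ~~ e v z & common_nbr e v z].
have [/existsP[z /andP[/and3P[_ vz /existsP[x /andP[vx xz]]] za]] | no_at2_a] :=
  boolP [exists z, at2 z && e z a]; first by exists x, z.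
(* [S] is the ball of radius 3 around [v]; an edge leaving it starts an induced P5. *)
pose S := [pred w | [|| w == v, e v w, at2 w | [exists z, at2 z && e z w]]].
have aS : a \notin S.
  by rewrite inE /at2 !negb_or eq_sym va eva (negbTE no_va) no_at2_a andbF.
have vS : v \in S by rewrite inE eqxx.
have [p [q [pS qS pq]]] := connect_edge_out vS aS (e_conn v a).
move: qS; rewrite inE !negb_or => /and4P[qv vq q_at2 no_at2_q].
have pv : p != v by apply: contraNneq vq => <-.
have vp : ~~ e v p.
  by apply: contraNN q_at2 => vp; rewrite /at2 qv vq; apply/existsP; exists p; rewrite vp.
have p_at2 : ~~ at2 p by apply: contraNN no_at2_q => p2; apply/existsP; exists p; rewrite p2.
move: pS; rewrite inE (negbTE pv) (negbTE vp) (negbTE p_at2) /= => /existsP[z /andP[z2 zp]].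
case/and3P: (z2) => _ vz /existsP[x /andP[vx xz]].
have xp : ~~ e x p.
  by apply: contraNN p_at2 => xp; rewrite /at2 pv vp; apply/existsP; exists x; rewrite vx.
have xq : ~~ e x q.
  by apply: contraNN q_at2 => xq; rewrite /at2 qv vq; apply/existsP; exists x; rewrite vx.
have zq : ~~ e z q by apply: contraNN no_at2_q => zq; apply/existsP; exists z; rewrite z2.
by case: noP5; apply: (induced_P5 vx xz zp pq).
Qed.

Lemma stable3_common_nbrs v a b :
  stable3 e v a b -> common_nbr e v a -> common_nbr e v b -> False.
Proof.
case/and4P=> va ab vb /and3P[eva eab evb].
case/existsP=> x /andP[vx xa]; case/existsP=> y /andP[vy yb].
have [xb|xb] := boolP (e x b).
  by apply: noclaw; apply: (induced_claw (c := x) (a := v) (b := a) (d := b)).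
have [ya|ya] := boolP (e y a).
  by apply: noclaw; apply: (induced_claw (c := y) (a := v) (b := a) (d := b)).
have [xy|xy] := boolP (e x y).
  by apply: nobull; apply: (induced_bull (t0 := x) (t1 := y) (t2 := v) (p3 := a) (p4 := b)).
by apply: noP5; apply: (induced_P5 (a := a) (b := x) (c := v) (d := y) (w := b)).
Qed.

Lemma stable3_no_common_nbrs v a b :
  stable3 e v a b -> ~~ common_nbr e v a -> ~~ common_nbr e v b -> False.
Proof.
case/and4P=> va ab vb /and3P[eva eab evb] na nb.
have [xa [za [vxa xza zaa vza]]] := induced_P4_of_no_common_nbr va eva na.
have [xb [zb [vxb xzb zbb vzb]]] := induced_P4_of_no_common_nbr vb evb nb.
have far x y : ~~ common_nbr e v y -> e v x -> ~~ e x y.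
  by move=> nvy vx; apply: contraNN nvy => xy; apply/existsP; exists x; rewrite vx.
have xaa := far _ _ na vxa; have xba := far _ _ na vxb.
have xab := far _ _ nb vxa; have xbb := far _ _ nb vxb.
have xa_a : xa != a by apply: (neq_of_sep (z := v)).
have xa_b : xa != b by apply: (neq_of_sep (z := v)).
have xb_a : xb != a by apply: (neq_of_sep (z := v)).
have xb_b : xb != b by apply: (neq_of_sep (z := v)).
have [zab|zab] := boolP (e za b).
  by apply: noclaw; apply: (induced_claw (c := za) (a := xa) (b := a) (d := b)).
have [zba|zba] := boolP (e zb a).
  by apply: noclaw; apply: (induced_claw (c := zb) (a := xb) (b := b) (d := a)).
have za_v : za != v by apply: (neq_of_sep (z := a)).
have zb_v : zb != v by apply: (neq_of_sep (z := b)).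
have za_zb : za != zb by apply: (neq_of_sep (z := a)).
have [zz|zz] := boolP (e za zb).
  have [xazb|xazb] := boolP (e xa zb).
    by apply: nobull; apply: (induced_bull (t0 := za) (t1 := zb) (t2 := xa) (p3 := a) (p4 := b)).
  have xa_zb : xa != zb by apply: (neq_of_sep (z := v)).
  have zb_a : zb != a by apply: (neq_of_sep (z := b)).
  by apply: noclaw; apply: (induced_claw (c := za) (a := xa) (b := a) (d := zb)).
have [xazb|xazb] := boolP (e xa zb).
  by apply: noclaw; apply: (induced_claw (c := xa) (a := v) (b := za) (d := zb)).
have [xbza|xbza] := boolP (e xb za).
  by apply: noclaw; apply: (induced_claw (c := xb) (a := v) (b := zb) (d := za)).
have [xx|xx] := boolP (e xa xb).
  by apply: noP5; apply: (induced_P5 (a := a) (b := za) (c := xa) (d := xb) (w := zb)).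
by apply: noP5; apply: (induced_P5 (a := a) (b := za) (c := xa) (d := v) (w := xb)).
Qed.

Lemma stable3_common_nbr_xor v a b :
  stable3 e v a b -> common_nbr e v a != common_nbr e v b.
Proof.
move=> svab; case: (boolP (common_nbr e v a)) => na; case: (boolP (common_nbr e v b)) => nb //.
  by case: (stable3_common_nbrs svab na nb).
by case: (stable3_no_common_nbrs svab na nb).
Qed.

Lemma no_stable3 a b c : ~~ stable3 e a b c.
Proof.
apply/negP => sabc; have [sbac scab] := stable3_perm sabc.
move: (stable3_common_nbr_xor sabc) (stable3_common_nbr_xor sbac).
move: (stable3_common_nbr_xor scab).
rewrite [common_nbr e b a]common_nbrC [common_nbr e c a]common_nbrC.
rewrite [common_nbr e c b]common_nbrC.
by case: (common_nbr e a b); case: (common_nbr e a c); case: (common_nbr e b c).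
Qed.

Section MinimalClosedNbhd.

Variable u : T.
Hypothesis u_min : forall x, #|closed_nbhd e u| <= #|closed_nbhd e x|.

Lemma outside_clique : is_clique e (~: closed_nbhd e u).
Proof.
move=> y1 y2; rewrite !in_setC !notin_closed_nbhd => /andP[y1u uy1] /andP[y2u uy2] y12.
apply/negPn/negP => ey12; move/negP: (no_stable3 u y1 y2); apply.
by apply/and4P; split=> //; apply/and3P.
Qed.

Lemma nbr_outside x x' :
  e u x -> e u x' -> x != x' -> ~~ e x x' -> exists2 y, y \in ~: closed_nbhd e u & e x y.
Proof.
move=> ux ux' xx' exx'.
have [/existsP[y /andP[yN xy]] | none] := boolP [exists y, (y \in ~: closed_nbhd e u) && e x y].
  by exists y.
have : closed_nbhd e x \proper closed_nbhd e u.
  apply/properP; split.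
    apply/subsetP => z; rewrite !inE => /orP[/eqP-> | xz]; first by rewrite ux orbT.
    apply: contraNT none => zN; apply/existsP; exists z.
    by rewrite xz andbT in_setC inE.
  by exists x'; [rewrite inE ux' orbT | rewrite notin_closed_nbhd eq_sym xx'].
by move/proper_card; rewrite ltnNge u_min.
Qed.

Lemma nbhd_clique : is_clique e (closed_nbhd e u).
Proof.
move=> x1 x2; rewrite !inE => /orP[/eqP-> | ux1] /orP[/eqP-> | ux2] x12 //.
  by rewrite eqxx in x12.
apply/negPn/negP => ex12.
have [y1 y1N x1y1] := nbr_outside ux1 ux2 x12 ex12.
have [y2 y2N x2y2] : exists2 y, y \in ~: closed_nbhd e u & e x2 y by apply: (nbr_outside (x' := x1)).
move: (y1N) (y2N); rewrite !in_setC !notin_closed_nbhd => /andP[y1u uy1] /andP[y2u uy2].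
have x2y1 : ~~ e x2 y1.
  by apply/negP => x2y1; apply: noC4; apply: (induced_C4 (a := u) (b := x1) (c := y1) (d := x2)).
have x1y2 : ~~ e x1 y2.
  by apply/negP => x1y2; apply: noC4; apply: (induced_C4 (a := u) (b := x2) (c := y2) (d := x1)).
have y12 : y1 != y2 by apply: (neq_of_sep (z := x1)).
have y1y2 := outside_clique y1N y2N y12.
by apply: noC5; apply: (induced_C5 (a := u) (b := x1) (c := y1) (d := y2) (w := x2)).
Qed.

Lemma nbhd_comparable_in : {in closed_nbhd e u &, forall x x', nbhd_comparable e x x'}.
Proof.
move=> x x' xN x'N; have [<-|xx'] := eqVneq x x'; first by rewrite /nbhd_comparable subxx.
have exx' := nbhd_clique xN x'N xx'.
apply/negPn/negP; rewrite negb_or => /andP[/subsetPn[p px px'] /subsetPn[q qx' qx]].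
move: px' qx; rewrite !notin_closed_nbhd => /andP[px' x'p] /andP[qx xq].
have x_p : x != p by apply: (neq_of_sep (z := x')).
have x'_q : x' != q by apply: (neq_of_sep (z := x)).
have xp : e x p by move: px; rewrite inE eq_sym (negbTE x_p).
have x'q : e x' q by move: qx'; rewrite inE eq_sym (negbTE x'_q).
have outside y z : z \in closed_nbhd e u -> y != z -> ~~ e z y -> y \in ~: closed_nbhd e u.
  by move=> zN yz zy; rewrite in_setC; apply: contra zy => yN; apply: nbhd_clique.
have pq : e p q.
  apply: outside_clique (outside _ _ x'N px' x'p) (outside _ _ xN qx xq) _.
  exact: neq_of_sep xp xq.
by apply: noC4; apply: (induced_C4 (a := x) (b := p) (c := q) (d := x')).
Qed.

End MinimalClosedNbhd.

Lemma forbidden_free_co_chain : co_chain e.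
Proof.
apply/co_chainP; case: (pickP (@predT T)) => [u0 _ | T0]; last first.
  by exists set0; split=> x; have := T0 x.
have [u _ u_min] := arg_minnP (fun x => #|closed_nbhd e x|) (isT : predT u0).
have {}u_min x : #|closed_nbhd e u| <= #|closed_nbhd e x| by apply: u_min.
exists (closed_nbhd e u); split.
- exact: nbhd_clique.
- exact: outside_clique.
- exact: nbhd_comparable_in.
Qed.

End ForbiddenFree.

End SimpleGraph.

Theorem theorem16 (T : finType) (e : rel T) :
  simple_graph e -> connected e ->
  ((~ induced_sub P5 e /\ ~ induced_sub C4 e /\ ~ induced_sub C5 e /\
    ~ induced_sub claw e /\ ~ induced_sub bull e) <-> co_chain e).
Proof.
move=> [e_sym e_irr] e_conn; split.
  by move=> [noP5 [noC4 [noC5 [noclaw nobull]]]]; apply: forbidden_free_co_chain.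
by case/(co_chain_no_induced e_sym).
Qed.
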